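(* Let $I=(z_1^3-z_3z_2,\,z_2^2)\subset\mathcal{O}_3$. Then $\mathbf{T}_2(I)=3$ and $\beta_2(I)=4$. More precisely, for $a,b\in\mathbb{C}$ one has $\mathbf{T}_1(I,az_1+bz_2+z_3)=4$ if $a\neq 0$ and $=3$ if $a=0$, while $\mathbf{T}_1(I,az_1+bz_2)=\infty$.
   Context: $\mathcal{O}_n$ denotes the local ring of germs at $0\in\mathbb{C}^n$ of holomorphic functions. $\Gamma$ denotes the set of non-constant germs of holomorphic maps $z\colon(\mathbb{C},0)\to(\mathbb{C}^n,0)$; $v(z)$ is the order of vanishing of $z$ at $0$ and $v(g\circ z)$ the order of vanishing of the one-variable germ $g\circ z$ ($v(0)=\infty$). For an ideal $I\subset\mathcal{O}_n$, $\mathbf{T}_1(I)=\sup_{z\in\Gamma}\inf_{g\in I}\frac{v(g\circ z)}{v(z)}$, and for $q\in\{1,\dots,n\}$, $\mathbf{T}_q(I)=\inf_{\{w_1,\dots,w_{q-1}\}}\mathbf{T}_1(I,w_1,\dots,w_{q-1})$ over all linear functions $w_1,\dots,w_{q-1}$, where $(I,w_1,\dots,w_{q-1})$ is the ideal generated by $I$ and the $w_j$. The generic value $\beta_q(I)$ is the unique $\beta\in\mathbb{R}\cup\{\infty\}$ such that there is a non-empty Zariski open subset $W$ of the Grassmannian $G^{n-q+1}$ of $(n-q+1)$-dimensional linear subspaces of $\mathbb{C}^n$ with $\mathbf{T}_1(I,w_1,\dots,w_{q-1})=\beta$ whenever $\{w_1=\dots=w_{q-1}=0\}\in W$. *)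

From Stdlib Require Import Reals List Arith.
Import ListNotations.
Open Scope R_scope.

Definition Cx := (R * R)%type.
Definition Czero : Cx := (0, 0).
Definition Cone : Cx := (1, 0).
Definition Cadd (x y : Cx) : Cx := (fst x + fst y, snd x + snd y).
Definition Copp (x : Cx) : Cx := (- fst x, - snd x).
Definition Cmul (x y : Cx) : Cx :=
  (fst x * fst y - snd x * snd y, fst x * snd y + snd x * fst y).
Definition Cnorm (x : Cx) : R := sqrt (fst x * fst x + snd x * snd x).
Definition Csum (l : list Cx) : Cx := fold_right Cadd Czero l.
Definition Cpow (x : Cx) (k : nat) : Cx := Nat.iter k (Cmul x) Cone.

Definition series1 := nat -> Cx.
Definition s1one : series1 := fun k => match k with O => Cone | _ => Czero end.
Definition s1mul (p q : series1) : series1 :=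
  fun k => Csum (map (fun i => Cmul (p i) (q (k - i)%nat)) (seq 0 (S k))).
Definition s1pow (p : series1) (m : nat) : series1 := Nat.iter m (s1mul p) s1one.

(** Power series in n variables: coefficients indexed by exponent lists of length n *)
Definition mseries := list nat -> Cx.
Definition deg (a : list nat) : nat := fold_right plus O a.
Fixpoint below (a : list nat) : list (list nat) :=
  match a with
  | [] => [[]]
  | x :: r => flat_map (fun i => map (cons i) (below r)) (seq 0 (S x))
  end.
Fixpoint lsub (a b : list nat) : list nat :=
  match a, b with
  | x :: a', y :: b' => (x - y)%nat :: lsub a' b'
  | _, _ => []
  end.
Definition msadd (f g : mseries) : mseries := fun a => Cadd (f a) (g a).
Definition msmul (f g : mseries) : mseries :=
  fun a => Csum (map (fun b => Cmul (f b) (g (lsub a b))) (below a)).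
Definition mono (c : Cx) (b : list nat) : mseries :=
  fun a => if list_eq_dec Nat.eq_dec a b then c else Czero.
Definition unitv (n i : nat) : list nat :=
  map (fun j => if Nat.eqb j i then 1%nat else 0%nat) (seq 0 n).
(* linear function c_0 z_1 + ... + c_{n-1} z_n, n = length c *)
Definition linform (c : list Cx) : mseries :=
  fun a => Csum (map (fun i => if list_eq_dec Nat.eq_dec a (unitv (length c) i)
                                then nth i c Czero else Czero) (seq 0 (length c))).

(** Germs at 0 of holomorphic functions on Cx^n = convergent power series *)
Definition is_germ (n : nat) (f : mseries) : Prop :=
  exists M rho : R, forall a, length a = n -> Cnorm (f a) <= M * rho ^ deg a.
Definition is_germ1 (p : series1) : Prop :=
  exists M rho : R, forall k, Cnorm (p k) <= M * rho ^ k.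

Definition is_curve (n : nat) (zs : list series1) : Prop :=
  length zs = n /\ Forall (fun z => is_germ1 z /\ z O = Czero) zs /\
  exists z, In z zs /\ exists k, z k <> Czero.

Fixpoint cmono (zs : list series1) (a : list nat) : series1 :=
  match zs, a with
  | z :: zs', x :: a' => s1mul (s1pow z x) (cmono zs' a')
  | _, _ => s1one
  end.
(* g o z (well defined since z(0) = 0) *)
Definition comp (n : nat) (g : mseries) (zs : list series1) : series1 :=
  fun k => Csum (map (fun a => Cmul (g a) (cmono zs a k))
                     (filter (fun a => Nat.leb (deg a) k) (below (repeat k n)))).

(** orders of vanishing; None stands for infinity *)
Definition order1 (p : series1) (ov : option nat) : Prop :=
  match ov with
  | Some k => p k <> Czero /\ forall j, (j < k)%nat -> p j = Czero
  | None => forall k, p k = Czero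
  end.
Definition curve_order (zs : list series1) (m : nat) : Prop :=
  (exists z, In z zs /\ z m <> Czero) /\
  forall j, (j < m)%nat -> forall z, In z zs -> z j = Czero.

Definition gen_ideal (n : nat) (fs : list mseries) (g : mseries) : Prop :=
  is_germ n g /\
  exists hs : list mseries, length hs = length fs /\ Forall (is_germ n) hs /\
    forall a, length a = n ->
      g a = Csum (map (fun hf => msmul (fst hf) (snd hf) a) (combine hs fs)).

Inductive ER := Fin (r : R) | PInf.
Definition ERle (x y : ER) : Prop :=
  match x, y with
  | Fin a, Fin b => a <= b
  | _, PInf => True
  | PInf, Fin _ => False
  end.
Definition is_glb (S : ER -> Prop) (x : ER) : Prop :=
  (forall y, S y -> ERle x y) /\ (forall l, (forall y, S y -> ERle l y) -> ERle l x).
Definition is_lub (S : ER -> Prop) (x : ER) : Prop :=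
  (forall y, S y -> ERle y x) /\ (forall u, (forall y, S y -> ERle y u) -> ERle x u).

Definition ratio_is (n : nat) (g : mseries) (zs : list series1) (e : ER) : Prop :=
  exists (m : nat) (ov : option nat), curve_order zs m /\ order1 (comp n g zs) ov /\
    e = match ov with Some k => Fin (INR k / INR m) | None => PInf end.

Definition T1_is (n : nat) (J : mseries -> Prop) (t : ER) : Prop :=
  exists inff : list series1 -> ER,
    (forall zs, is_curve n zs ->
       is_glb (fun e => exists g, J g /\ ratio_is n g zs e) (inff zs)) /\
    is_lub (fun e => exists zs, is_curve n zs /\ e = inff zs) t.

Definition Tq_is (n q : nat) (fs : list mseries) (t : ER) : Prop :=
  is_glb (fun e => exists ws : list (list Cx),
            length ws = (q - 1)%nat /\ Forall (fun c => length c = n) ws /\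
            T1_is n (gen_ideal n (fs ++ map linform ws)) e) t.

(** Polynomials (for Zariski open sets): lists of (coefficient, exponent) *)
Definition mpoly := list (Cx * list nat).
Fixpoint mevalpt (pt : list Cx) (a : list nat) : Cx :=
  match pt, a with
  | c :: pt', x :: a' => Cmul (Cpow c x) (mevalpt pt' a')
  | _, _ => Cone
  end.
Definition peval (P : mpoly) (pt : list Cx) : Cx :=
  Csum (map (fun t => Cmul (fst t) (mevalpt pt (snd t))) P).
Definition homogeneous (n : nat) (P : mpoly) (d : nat) : Prop :=
  Forall (fun t => length (snd t) = n /\ deg (snd t) = d) P.

Definition fI1 : mseries := msadd (mono Cone [3;0;0]%nat) (mono (Copp Cone) [0;1;1]%nat).
Definition fI2 : mseries := mono Cone [0;2;0]%nat.
Definition Igens : list mseries := [fI1; fI2].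

(* Composition with a curve z is a ring morphism O_3 -> C{s}.  Hence if the generators
   z1^3 - z2 z3, z2^2 and w of J vanish along z to order >= K, so does every element of J,
   while otherwise some generator itself has order < K.  So T_1(J) <= t amounts to: along no
   curve of order m do all generators vanish to order > t m; and T_1(J) >= t follows from a
   single curve of order m along which they all vanish to order t m.
   Upper bounds: if they all vanished to order > t m, then z2^2 forces v(z2) > t m / 2, and the
   term of order 3 m of z1^3 - z2 z3, or the term of order m of w, is nonzero; this works with
   t = 4 when w involves z3, and with t = 3 when moreover w does not involve z1.
   Lower bounds: quadratic curves such as (ac s, -ac^3 s^2, -a^2 s + abc^2 s^2) for
   w = a z1 + b z2 + c z3; when w does not involve z3, all generators vanish identically along
   the z3-axis, whence T_1 = infinity. *)

From Stdlib Require Import Reals List Lia Lra Ring Setoid Morphisms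
  FunctionalExtensionality Classical ClassicalEpsilon.
Import ListNotations.
Open Scope R_scope.

Arguments Cmul : simpl never.
Arguments Cadd : simpl never.
Arguments Copp : simpl never.

Lemma Cx_ring : ring_theory Czero Cone Cadd Cmul (fun x y => Cadd x (Copp y)) Copp eq.
Proof.
  constructor; intros; repeat match goal with x : Cx |- _ => destruct x end;
    unfold Cadd, Cmul, Copp, Czero, Cone; simpl; f_equal; ring.
Qed.
Add Ring CxRing : Cx_ring.

Lemma Cone_neq0 : Cone <> Czero.
Proof. unfold Cone, Czero; intro E; injection E; lra. Qed.

Lemma Cmul_integral x y : Cmul x y = Czero -> x = Czero \/ y = Czero.
Proof.
  destruct x as [a b], y as [c d]; unfold Cmul, Czero; simpl; intro E.
  injection E as E1 E2.
  destruct (classic (a = 0 /\ b = 0)) as [[-> ->]|Hab]; [now left|right].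
  assert (Hn : a * a + b * b <> 0) by (intro; apply Hab; split; nra).
  (* multiply x y by the conjugate of x *)
  assert (Ec : c * (a * a + b * b) = 0).
  { replace (c * (a * a + b * b)) with (a * (a * c - b * d) + b * (a * d + b * c)) by ring.
    rewrite E1, E2. ring. }
  assert (Ed : d * (a * a + b * b) = 0).
  { replace (d * (a * a + b * b)) with (a * (a * d + b * c) - b * (a * c - b * d)) by ring.
    rewrite E1, E2. ring. }
  apply Rmult_integral in Ec as [-> | ?]; [|contradiction].
  apply Rmult_integral in Ed as [-> | ?]; [reflexivity|contradiction].
Qed.

Lemma Cmul_neq0 x y : x <> Czero -> y <> Czero -> Cmul x y <> Czero.
Proof. intros Hx Hy E; destruct (Cmul_integral _ _ E); auto. Qed.

Definition lsum {A} (l : list A) (F : A -> Cx) : Cx := Csum (map F l).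

#[global] Instance lsum_proper {A} :
  Proper (eq ==> pointwise_relation A eq ==> eq) (@lsum A).
Proof. intros l l' <- F G H. unfold lsum. f_equal. apply map_ext. exact H. Qed.

Lemma lsum_cons {A} x l (F : A -> Cx) : lsum (x :: l) F = Cadd (F x) (lsum l F).
Proof. reflexivity. Qed.

Lemma lsum_app {A} l1 l2 (F : A -> Cx) :
  lsum (l1 ++ l2) F = Cadd (lsum l1 F) (lsum l2 F).
Proof.
  induction l1; simpl; [cbn; ring|]. rewrite !lsum_cons, IHl1; ring.
Qed.

Lemma lsum_ext {A} l (F G : A -> Cx) :
  (forall x, In x l -> F x = G x) -> lsum l F = lsum l G.
Proof. intro H. unfold lsum. f_equal. apply map_ext_in. exact H. Qed.

Lemma lsum_zero {A} l (F : A -> Cx) : (forall x, In x l -> F x = Czero) -> lsum l F = Czero.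
Proof.
  induction l as [|x l IH]; intro H; [reflexivity|].
  rewrite lsum_cons, H, IH; [ring| |now left]. intros; apply H; now right.
Qed.

Lemma lsum_add {A} l (F G : A -> Cx) :
  lsum l (fun x => Cadd (F x) (G x)) = Cadd (lsum l F) (lsum l G).
Proof. induction l; [cbn; ring|]. rewrite !lsum_cons, IHl. ring. Qed.

Lemma lsum_mull {A} l c (F : A -> Cx) : lsum l (fun x => Cmul c (F x)) = Cmul c (lsum l F).
Proof. induction l; [cbn; ring|]. rewrite !lsum_cons, IHl. ring. Qed.

Lemma lsum_mulr {A} l c (F : A -> Cx) : lsum l (fun x => Cmul (F x) c) = Cmul (lsum l F) c.
Proof. induction l; [cbn; ring|]. rewrite !lsum_cons, IHl. ring. Qed.

Lemma lsum_swap {A B} l1 l2 (F : A -> B -> Cx) :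
  lsum l1 (fun x => lsum l2 (F x)) = lsum l2 (fun y => lsum l1 (fun x => F x y)).
Proof.
  induction l1; [symmetry; now apply lsum_zero|].
  rewrite lsum_cons, IHl1, <- lsum_add. reflexivity.
Qed.

Lemma lsum_flat_map {A B} (G : A -> list B) l (F : B -> Cx) :
  lsum (flat_map G l) F = lsum l (fun x => lsum (G x) F).
Proof. induction l; [reflexivity|]. simpl. rewrite lsum_app, IHl. reflexivity. Qed.

Lemma lsum_map {A B} (g : A -> B) l (F : B -> Cx) : lsum (map g l) F = lsum l (fun x => F (g x)).
Proof. unfold lsum. rewrite map_map. reflexivity. Qed.

Lemma lsum_filter {A} (P : A -> bool) l F :
  lsum (filter P l) F = lsum l (fun x => if P x then F x else Czero).
Proof.
  induction l as [|x l IH]; [reflexivity|]. simpl. rewrite lsum_cons.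
  destruct (P x); rewrite ?lsum_cons, IH; ring.
Qed.

Definition sumC (N : nat) (F : nat -> Cx) : Cx := lsum (seq 0 N) F.

#[global] Instance sumC_proper : Proper (eq ==> pointwise_relation nat eq ==> eq) sumC.
Proof. intros n n' <- F G H. unfold sumC. rewrite H. reflexivity. Qed.

Lemma sumC_S N F : sumC (S N) F = Cadd (sumC N F) (F N).
Proof. unfold sumC. rewrite seq_S, lsum_app. cbn. ring. Qed.

Lemma sumC_shift N F : sumC (S N) F = Cadd (F O) (sumC N (fun i => F (S i))).
Proof. unfold sumC. simpl. rewrite lsum_cons, <- seq_shift, lsum_map. reflexivity. Qed.

Lemma sumC_ext N F G : (forall i, (i < N)%nat -> F i = G i) -> sumC N F = sumC N G.
Proof. intro H. apply lsum_ext. intros x Hx. apply in_seq in Hx. apply H. lia. Qed.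

Lemma sumC_add N F G : sumC N (fun i => Cadd (F i) (G i)) = Cadd (sumC N F) (sumC N G).
Proof. apply lsum_add. Qed.

Lemma sumC_mull N c F : sumC N (fun i => Cmul c (F i)) = Cmul c (sumC N F).
Proof. apply lsum_mull. Qed.

Lemma sumC_mulr N c F : sumC N (fun i => Cmul (F i) c) = Cmul (sumC N F) c.
Proof. apply lsum_mulr. Qed.

Lemma sumC_zero N F : (forall i, (i < N)%nat -> F i = Czero) -> sumC N F = Czero.
Proof. intro H. apply lsum_zero. intros x Hx. apply in_seq in Hx. apply H. lia. Qed.

Lemma sumC_truncate N M F :
  (M <= N)%nat -> (forall i, (M <= i < N)%nat -> F i = Czero) -> sumC N F = sumC M F.
Proof.
  induction N; intros H1 H2; [now replace M with O by lia|].
  destruct (Nat.eq_dec M (S N)) as [->|]; [reflexivity|].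
  rewrite sumC_S, IHN, (H2 N) by (intros; try apply H2; lia). ring.
Qed.

Lemma sumC_single N F i0 :
  (i0 < N)%nat -> (forall i, (i < N)%nat -> i <> i0 -> F i = Czero) -> sumC N F = F i0.
Proof.
  induction N; intros H1 H2; [lia|].
  rewrite sumC_S. destruct (Nat.eq_dec i0 N) as [->|].
  - rewrite sumC_zero by (intros; apply H2; lia). ring.
  - rewrite IHN, (H2 N) by (auto; lia). ring.
Qed.

Lemma sumC_rev k F : sumC (S k) F = sumC (S k) (fun i => F (k - i)%nat).
Proof.
  revert F; induction k; intro F; [reflexivity|].
  rewrite sumC_shift, IHk, (sumC_S (S k)), Nat.sub_diag.
  rewrite (sumC_ext (S k) (fun i => F (S k - i)%nat) (fun i => F (S (k - i)))) by
    (intros; f_equal; lia).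
  ring.
Qed.

(* Summing over the triangle [b + c < N] in two orders. *)
Lemma sumC_triangle N (G F : nat -> nat -> Cx) :
  (forall a b, (b <= a)%nat -> G a b = F b (a - b)%nat) ->
  sumC N (fun a => sumC (S a) (G a)) = sumC N (fun b => sumC (N - b) (F b)).
Proof.
  intro HG.
  transitivity (sumC N (fun a => sumC (S a) (fun b => F b (a - b)%nat))).
  { apply sumC_ext; intros; apply sumC_ext; intros; apply HG; lia. }
  clear G HG. induction N; [reflexivity|].
  rewrite sumC_S, IHN.
  rewrite (sumC_ext (S N) (fun b => sumC (S N - b) (F b))
            (fun b => Cadd (sumC (N - b) (F b)) (F b (N - b)%nat))).
  2:{ intros i Hi. replace (S N - i)%nat with (S (N - i)) by lia. apply sumC_S. }
  rewrite sumC_add, (sumC_S N (fun b => sumC (N - b) (F b))), Nat.sub_diag. cbn. ring.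
Qed.

Definition s1add (p q : series1) : series1 := fun k => Cadd (p k) (q k).
Definition s1zero : series1 := fun _ => Czero.
Definition s1opp (p : series1) : series1 := fun k => Copp (p k).

Lemma s1mul_sumC p q k : s1mul p q k = sumC (S k) (fun i => Cmul (p i) (q (k - i)%nat)).
Proof. reflexivity. Qed.

Lemma s1mul_1l p : s1mul s1one p = p.
Proof.
  extensionality k. rewrite s1mul_sumC, (sumC_single _ _ O).
  - rewrite Nat.sub_0_r. cbn. ring.
  - lia.
  - intros [|i] _ Hi; [lia|]. cbn. ring.
Qed.

Lemma s1mul_comm p q : s1mul p q = s1mul q p.
Proof.
  extensionality k. rewrite !s1mul_sumC, sumC_rev.
  apply sumC_ext. intros i Hi. replace (k - (k - i))%nat with i by lia. ring.
Qed.

Lemma s1mul_assoc p q r : s1mul p (s1mul q r) = s1mul (s1mul p q) r.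
Proof.
  extensionality k. rewrite !s1mul_sumC.
  setoid_rewrite s1mul_sumC. setoid_rewrite <- sumC_mulr.
  rewrite (sumC_triangle (S k) _ (fun b c => Cmul (Cmul (p b) (q c)) (r (k - (b + c))%nat)))
    by (intros; f_equal; f_equal; lia).
  apply sumC_ext. intros b Hb. rewrite <- sumC_mull.
  replace (S k - b)%nat with (S (k - b)) by lia.
  apply sumC_ext. intros c Hc. rewrite Nat.sub_add_distr. ring.
Qed.

Lemma s1mul_addl p q r : s1mul (s1add p q) r = s1add (s1mul p r) (s1mul q r).
Proof.
  extensionality k. unfold s1add at 2. rewrite !s1mul_sumC, <- sumC_add.
  apply sumC_ext. intros; unfold s1add; ring.
Qed.

Lemma series1_ring :
  ring_theory s1zero s1one s1add s1mul (fun x y => s1add x (s1opp y)) s1opp eq.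
Proof.
  constructor; intros; try (extensionality k; unfold s1add, s1zero, s1opp; ring).
  - apply s1mul_1l.
  - apply s1mul_comm.
  - apply s1mul_assoc.
  - apply s1mul_addl.
Qed.
Add Ring Series1Ring : series1_ring.

Lemma s1pow_0 z : s1pow z 0 = s1one.
Proof. reflexivity. Qed.

Lemma s1pow_S z m : s1pow z (S m) = s1mul z (s1pow z m).
Proof. reflexivity. Qed.

Lemma s1pow_add z a b : s1pow z (a + b) = s1mul (s1pow z a) (s1pow z b).
Proof.
  induction a; simpl plus; rewrite ?s1pow_S, ?IHa, ?s1pow_0; ring.
Qed.

Lemma s1pow_3 z : s1pow z 3 = s1mul z (s1mul z z).
Proof. rewrite !s1pow_S, s1pow_0. ring. Qed.

Definition ord_ge (p : series1) (n : nat) : Prop := forall j, (j < n)%nat -> p j = Czero.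

Lemma ord_ge_mul p q m n : ord_ge p m -> ord_ge q n -> ord_ge (s1mul p q) (m + n).
Proof.
  intros Hp Hq j Hj. rewrite s1mul_sumC. apply sumC_zero. intros i Hi.
  destruct (Nat.lt_ge_cases i m); [rewrite Hp by lia | rewrite Hq by lia]; ring.
Qed.

Lemma ord_ge_pow z m : z O = Czero -> ord_ge (s1pow z m) m.
Proof.
  intro Hz. induction m; [intros j Hj; lia|].
  apply (ord_ge_mul _ _ 1); auto. intros j Hj. now replace j with O by lia.
Qed.

Lemma s1mul_lead p q m n :
  ord_ge p m -> ord_ge q n -> s1mul p q (m + n)%nat = Cmul (p m) (q n).
Proof.
  intros Hp Hq. rewrite s1mul_sumC, (sumC_single _ _ m).
  - do 2 f_equal. lia.
  - lia.
  - intros i Hi Hne. destruct (Nat.lt_ge_cases i m); [rewrite Hp by lia | rewrite Hq by lia]; ring.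
Qed.

Lemma s1pow3_lead z m : ord_ge z m -> s1pow z 3 (3 * m)%nat = Cmul (z m) (Cmul (z m) (z m)).
Proof.
  intro H. rewrite s1pow_3. replace (3 * m)%nat with (m + (m + m))%nat by lia.
  rewrite !s1mul_lead; auto. apply (ord_ge_mul _ _ m m); auto.
Qed.

Lemma least_nat (P : nat -> Prop) j :
  P j -> exists k, P k /\ (k <= j)%nat /\ forall i, (i < k)%nat -> ~ P i.
Proof.
  revert P. induction j as [j IH] using (well_founded_induction Wf_nat.lt_wf). intros P Hj.
  destruct (classic (exists i, (i < j)%nat /\ P i)) as [[i [Hi Pi]]|Hno].
  - destruct (IH i Hi P Pi) as [k [Pk [Hk Hm]]]. exists k. repeat split; auto. lia.
  - exists j. repeat split; auto. intros i Hi Pi. apply Hno. eauto.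
Qed.

Lemma order1_exists p j : p j <> Czero -> exists k, (k <= j)%nat /\ order1 p (Some k).
Proof.
  intro H. destruct (least_nat (fun i => p i <> Czero) j H) as [k [Pk [Hk Hm]]].
  exists k. split; auto. split; auto. intros i Hi. apply NNPP. apply Hm; auto.
Qed.

Lemma ord_ge_sqr z K : ord_ge (s1mul z z) K -> forall j, (j + j < K)%nat -> z j = Czero.
Proof.
  intros H j Hj. apply NNPP. intro Hn.
  destruct (order1_exists _ _ Hn) as [k [Hk [Hzk Hlow]]].
  apply (Cmul_neq0 _ _ Hzk Hzk). rewrite <- s1mul_lead by exact Hlow. apply H. lia.
Qed.

Fixpoint lle (c M : list nat) : Prop :=
  match c, M with
  | [], [] => True
  | x :: c', y :: M' => (x <= y)%nat /\ lle c' M'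
  | _, _ => False
  end.

Fixpoint ladd (a b : list nat) : list nat :=
  match a, b with
  | x :: a', y :: b' => (x + y)%nat :: ladd a' b'
  | _, _ => []
  end.

Lemma in_below c M : In c (below M) <-> lle c M.
Proof.
  revert c; induction M as [|y M IH]; intro c.
  - simpl. destruct c; simpl; intuition congruence.
  - change (below (y :: M)) with (flat_map (fun i => map (cons i) (below M)) (seq 0 (S y))).
    rewrite in_flat_map. split.
    + intros [i [Hi Hc]]. apply in_map_iff in Hc. destruct Hc as [c' [<- Hc']].
      apply in_seq in Hi. simpl. split; [lia|]. apply IH; auto.
    + destruct c as [|x c']; [simpl; tauto|]. intros [Hx Hc]. exists x. split.
      * apply in_seq; lia.
      * apply in_map, IH, Hc.
Qed.

Lemma lle_length c M : lle c M -> length c = length M.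
Proof.
  revert M; induction c; destruct M; simpl; try tauto. intros [_ H]. f_equal; auto.
Qed.

Lemma lle_repeat_length c k n : lle c (repeat k n) -> length c = n.
Proof. intro H. apply lle_length in H. now rewrite repeat_length in H. Qed.

Lemma lle_repeat k K n : (k <= K)%nat -> lle (repeat k n) (repeat K n).
Proof. induction n; simpl; auto. Qed.

Lemma lle_repeat_deg b K n : length b = n -> (deg b <= K)%nat -> lle b (repeat K n).
Proof.
  revert b; induction n; intros [|x b] Hb Hd; simpl in *; try discriminate; auto.
  split; [lia|]. apply IHn; lia.
Qed.

Lemma not_lle_repeat_deg c k K n :
  lle c (repeat K n) -> ~ lle c (repeat k n) -> (k < deg c)%nat.
Proof.
  revert c; induction n; intros [|x c] H1 H2; simpl in *; try tauto.
  destruct H1 as [Hx Hc]. destruct (Nat.le_gt_cases x k); [|lia].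
  assert (k < deg c)%nat by (apply IHn; tauto). lia.
Qed.

Lemma lle_lsub_repeat b k n : length b = n -> lle (lsub (repeat k n) b) (repeat k n).
Proof.
  revert b; induction n; intros [|x b] Hb; simpl in *; try discriminate; auto.
  split; [lia|]. apply IHn; lia.
Qed.

Lemma not_lle_lsub_deg b c k n : lle b (repeat k n) -> lle c (repeat k n) ->
  ~ lle c (lsub (repeat k n) b) -> (k < deg b + deg c)%nat.
Proof.
  revert b c; induction n; intros [|x b] [|y c] Hb Hc Hn; simpl in *; try tauto.
  destruct Hb as [Hx Hb], Hc as [Hy Hc].
  destruct (Nat.le_gt_cases y (k - x)); [|lia].
  assert (k < deg b + deg c)%nat by (apply IHn; tauto). lia.
Qed.

Lemma lsub_length a b : length (lsub a b) = Nat.min (length a) (length b).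
Proof. revert b; induction a; destruct b; simpl; auto. Qed.

Lemma ladd_lsub b a : lle b a -> ladd b (lsub a b) = a.
Proof.
  revert a; induction b as [|x b IH]; intros [|y a] H; simpl in *; try tauto.
  destruct H. f_equal; auto. lia.
Qed.

Lemma lsub_repeat0 a : lsub a (repeat 0%nat (length a)) = a.
Proof. induction a; simpl; f_equal; auto; lia. Qed.

Lemma lle_repeat0 a : lle (repeat 0%nat (length a)) a.
Proof. induction a; simpl; auto. split; [lia|auto]. Qed.

Lemma lsum_below_cons x r F :
  lsum (below (x :: r)) F = sumC (S x) (fun i => lsum (below r) (fun b => F (i :: b))).
Proof.
  change (below (x :: r)) with (flat_map (fun i => map (cons i) (below r)) (seq 0 (S x))).
  rewrite lsum_flat_map. apply lsum_ext. intros. apply lsum_map.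
Qed.

Lemma lsum_below_nil F : lsum (below []) F = F [].
Proof. cbn. ring. Qed.

(* The substitution [c = a - b] turns [b <= a <= M] into [b <= M], [c <= M - b]. *)
Lemma lsum_below_reindex M (G : list nat -> list nat -> Cx) :
  lsum (below M) (fun a => lsum (below a) (fun b => G b (lsub a b))) =
  lsum (below M) (fun b => lsum (below (lsub M b)) (G b)).
Proof.
  revert G; induction M as [|x r IH]; intro G.
  - rewrite !lsum_below_nil. reflexivity.
  - rewrite !lsum_below_cons. setoid_rewrite lsum_below_cons.
    transitivity (sumC (S x) (fun i => sumC (S i) (fun j => lsum (below r) (fun b =>
        lsum (below (lsub r b)) (fun c => G (j :: b) ((i - j)%nat :: c)))))).
    { apply sumC_ext; intros i Hi. unfold sumC at 1. rewrite lsum_swap.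
      apply sumC_ext; intros j Hj. apply (IH (fun b c => G (j :: b) ((i - j)%nat :: c))). }
    rewrite (sumC_triangle (S x) _ (fun b c => lsum (below r) (fun b' =>
        lsum (below (lsub r b')) (fun c' => G (b :: b') (c :: c'))))) by reflexivity.
    apply sumC_ext; intros i Hi. replace (S x - i)%nat with (S (x - i)) by lia.
    unfold sumC. rewrite lsum_swap. reflexivity.
Qed.

Lemma lsum_below_extend M' M F : lle M' M ->
  (forall c, lle c M -> ~ lle c M' -> F c = Czero) -> lsum (below M') F = lsum (below M) F.
Proof.
  revert M' F; induction M as [|x r IH]; intros [|x' r'] F H1 H2; try destruct H1; [reflexivity|].
  rewrite !lsum_below_cons. symmetry.
  rewrite (sumC_truncate (S x) (S x')); [|lia|].
  - apply sumC_ext; intros i Hi. symmetry. apply IH; auto.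
    intros c Hc Hn. apply H2; simpl; [split; [lia|auto]|tauto].
  - intros i Hi. apply lsum_zero. intros c Hc. apply in_below in Hc.
    apply H2; simpl; [split; [lia|auto]|lia].
Qed.

Lemma lsum_below_delta M b X : lle b M ->
  lsum (below M) (fun a => if list_eq_dec Nat.eq_dec a b then X a else Czero) = X b.
Proof.
  revert b X; induction M as [|x r IH]; intros [|y b] X H; try destruct H.
  - rewrite lsum_below_nil. destruct (list_eq_dec Nat.eq_dec [] []); congruence.
  - rewrite lsum_below_cons, (sumC_single _ _ y); [|lia|].
    + rewrite <- (IH b (fun a => X (y :: a))) by auto. apply lsum_ext. intros a _.
      destruct (list_eq_dec Nat.eq_dec (y :: a) (y :: b)), (list_eq_dec Nat.eq_dec a b);
        congruence.
    + intros i Hi Hne. apply lsum_zero. intros a _.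
      destruct (list_eq_dec Nat.eq_dec (i :: a) (y :: b)); congruence.
Qed.

Definition at_origin (zs : list series1) : Prop := Forall (fun z => z O = Czero) zs.

Lemma cmono_ladd zs b c :
  length b = length c -> cmono zs (ladd b c) = s1mul (cmono zs b) (cmono zs c).
Proof.
  revert b c; induction zs as [|z zs IH]; intros [|x b] [|y c] H; simpl in *;
    try discriminate; try ring.
  rewrite IH, s1pow_add by lia. ring.
Qed.

Lemma ord_ge_cmono zs a : at_origin zs -> (length a <= length zs)%nat ->
  ord_ge (cmono zs a) (deg a).
Proof.
  revert a; induction zs as [|z zs IH]; intros [|x a] Hz Hl; simpl in *;
    try (intros j Hj; lia); try lia.
  inversion Hz; subst. apply ord_ge_mul; [apply ord_ge_pow | apply IH]; auto. lia.
Qed.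

Lemma comp_lsum n g zs k : comp n g zs k =
  lsum (filter (fun a => Nat.leb (deg a) k) (below (repeat k n)))
    (fun a => Cmul (g a) (cmono zs a k)).
Proof. reflexivity. Qed.

(* [comp] sums over [deg a <= k] only; any box [repeat K n] with [K >= k] may be used instead. *)
Lemma comp_box n g zs k K : length zs = n -> at_origin zs -> (k <= K)%nat ->
  comp n g zs k = lsum (below (repeat K n)) (fun a => Cmul (g a) (cmono zs a k)).
Proof.
  intros Hl Hz HK. rewrite comp_lsum, lsum_filter, (lsum_below_extend (repeat k n) (repeat K n)).
  - apply lsum_ext. intros a Ha. apply in_below in Ha.
    destruct (Nat.leb_spec (deg a) k); [reflexivity|].
    rewrite (ord_ge_cmono zs a); auto; [ring|]. apply lle_repeat_length in Ha; lia.
  - now apply lle_repeat.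
  - intros c H1 H2. pose proof (not_lle_repeat_deg _ _ _ _ H1 H2).
    destruct (Nat.leb_spec (deg c) k); [lia|reflexivity].
Qed.

Lemma comp_ext n g g' zs :
  (forall a, length a = n -> g a = g' a) -> comp n g zs = comp n g' zs.
Proof.
  intro H. extensionality k. unfold comp. f_equal. apply map_ext_in. intros a Ha.
  apply filter_In in Ha as [Ha _]. apply in_below, lle_repeat_length in Ha.
  rewrite H; auto.
Qed.

Lemma comp_add n g1 g2 zs :
  comp n (msadd g1 g2) zs = s1add (comp n g1 zs) (comp n g2 zs).
Proof.
  extensionality k. unfold s1add. rewrite !comp_lsum, <- lsum_add.
  apply lsum_ext. intros; unfold msadd; ring.
Qed.

Lemma comp_zero n zs : comp n (fun _ => Czero) zs = s1zero.
Proof.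
  extensionality k. rewrite comp_lsum. apply lsum_zero. intros; ring.
Qed.

Definition s1scale (c : Cx) (p : series1) : series1 := fun k => Cmul c (p k).

Lemma comp_mono n zs c b : length zs = n -> at_origin zs -> length b = n ->
  comp n (mono c b) zs = s1scale c (cmono zs b).
Proof.
  intros Hl Hz Hb. extensionality k. unfold s1scale.
  rewrite (comp_box n _ zs k (k + deg b)%nat) by (auto; lia).
  rewrite <- (lsum_below_delta (repeat (k + deg b)%nat n) b (fun a => Cmul c (cmono zs a k)))
    by (apply lle_repeat_deg; auto; lia).
  apply lsum_ext. intros a _. unfold mono. destruct (list_eq_dec Nat.eq_dec a b); ring.
Qed.

Section CompMul.
Variables (n : nat) (zs : list series1) (h f : mseries) (k : nat).
Hypotheses (Hlen : length zs = n) (Hzs : at_origin zs).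

Let box := below (repeat k n).
Let term b c := Cmul (Cmul (h b) (f c)) (s1mul (cmono zs b) (cmono zs c) k).

Lemma comp_msmul_box : comp n (msmul h f) zs k = lsum box (fun b => lsum box (term b)).
Proof.
  rewrite (comp_box n _ zs k k) by auto.
  transitivity (lsum box (fun a => lsum (below a) (fun b => term b (lsub a b)))).
  { apply lsum_ext. intros a Ha. apply in_below in Ha. unfold msmul.
    fold (lsum (below a) (fun b => Cmul (h b) (f (lsub a b)))).
    rewrite <- lsum_mulr. apply lsum_ext. intros b Hb. apply in_below in Hb.
    unfold term. rewrite <- cmono_ladd, ladd_lsub by
      (auto; rewrite lsub_length; apply lle_length in Hb; lia).
    ring. }
  unfold box. rewrite lsum_below_reindex. apply lsum_ext. intros b Hb. apply in_below in Hb.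
  apply lsum_below_extend; [apply lle_lsub_repeat; eapply lle_repeat_length; eauto|].
  intros c Hc Hn. pose proof (not_lle_lsub_deg b c k n Hb Hc Hn).
  unfold term. rewrite (ord_ge_mul _ _ (deg b) (deg c)); [ring| | |lia];
    apply ord_ge_cmono; auto; erewrite lle_repeat_length by eauto; lia.
Qed.

Lemma s1mul_comp_box :
  s1mul (comp n h zs) (comp n f zs) k = lsum box (fun b => lsum box (term b)).
Proof.
  rewrite s1mul_sumC.
  rewrite (sumC_ext (S k) _ (fun p => lsum box (fun b => lsum box (fun c =>
     Cmul (Cmul (h b) (f c)) (Cmul (cmono zs b p) (cmono zs c (k - p)%nat)))))).
  2:{ intros p Hp. rewrite (comp_box n h zs p k), (comp_box n f zs (k - p) k) by (auto; lia).
      rewrite <- lsum_mulr. apply lsum_ext. intros b _.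
      rewrite <- lsum_mull. apply lsum_ext. intros c _. ring. }
  unfold sumC. rewrite lsum_swap. apply lsum_ext. intros b _.
  rewrite lsum_swap. apply lsum_ext. intros c _.
  unfold term. rewrite s1mul_sumC. unfold sumC. rewrite <- lsum_mull. apply lsum_ext. intros; ring.
Qed.

End CompMul.

Lemma comp_msmul n zs h f : length zs = n -> at_origin zs ->
  comp n (msmul h f) zs = s1mul (comp n h zs) (comp n f zs).
Proof.
  intros Hl Hz. extensionality k. now rewrite comp_msmul_box, s1mul_comp_box.
Qed.

Lemma comp_combination n zs g L : length zs = n -> at_origin zs ->
  (forall a, length a = n -> g a = Csum (map (fun hf => msmul (fst hf) (snd hf) a) L)) ->
  comp n g zs = fold_right (fun hf => s1add (s1mul (comp n (fst hf) zs) (comp n (snd hf) zs)))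
                  s1zero L.
Proof.
  intros Hl Hz Hg. rewrite (comp_ext n g _ zs Hg). clear Hg g.
  induction L as [|hf L IH]; [apply comp_zero|].
  simpl. rewrite <- IH, <- comp_msmul by auto. apply comp_add.
Qed.

Definition gens_vanish (n : nat) (fs : list mseries) (zs : list series1) (K : nat) : Prop :=
  forall f, In f fs -> ord_ge (comp n f zs) K.

Lemma ord_ge_add p q K : ord_ge p K -> ord_ge q K -> ord_ge (s1add p q) K.
Proof. intros Hp Hq j Hj. unfold s1add. rewrite Hp, Hq by auto. ring. Qed.

Lemma gen_ideal_ord_ge n fs zs g K : length zs = n -> at_origin zs ->
  gen_ideal n fs g -> gens_vanish n fs zs K -> ord_ge (comp n g zs) K.
Proof.
  intros Hl Hz [_ [hs [_ [_ Hg]]]] Hf. rewrite (comp_combination n zs g _ Hl Hz Hg).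
  assert (Hin : forall hf, In hf (combine hs fs) -> In (snd hf) fs)
    by (intros [h f]; apply in_combine_r).
  clear Hg. induction (combine hs fs) as [|hf L IH]; [intros j _; reflexivity|].
  apply ord_ge_add.
  - apply (ord_ge_mul _ _ 0 K); [intros j Hj; lia|]. apply Hf, Hin. now left.
  - apply IH. intros; apply Hin; now right.
Qed.

Lemma Cnorm_nonneg x : 0 <= Cnorm x.
Proof. apply sqrt_pos. Qed.

Lemma Cnorm_zero : Cnorm Czero = 0.
Proof. unfold Cnorm, Czero; simpl. rewrite Rmult_0_l, Rplus_0_l. apply sqrt_0. Qed.

Lemma Cnorm_add_le x y : Cnorm (Cadd x y) <= Cnorm x + Cnorm y.
Proof.
  destruct x as [a b], y as [c d]. unfold Cnorm, Cadd; simpl.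
  set (S1 := sqrt (a * a + b * b)). set (S2 := sqrt (c * c + d * d)).
  assert (H1 : S1 * S1 = a * a + b * b) by (apply sqrt_sqrt; nra).
  assert (H2 : S2 * S2 = c * c + d * d) by (apply sqrt_sqrt; nra).
  assert (P1 : 0 <= S1) by apply sqrt_pos. assert (P2 : 0 <= S2) by apply sqrt_pos.
  (* Cauchy-Schwarz, via Lagrange's identity *)
  assert (HC : a * c + b * d <= S1 * S2).
  { assert ((a * c + b * d) * (a * c + b * d) <= (S1 * S2) * (S1 * S2)).
    { replace ((S1 * S2) * (S1 * S2)) with ((S1 * S1) * (S2 * S2)) by ring.
      rewrite H1, H2. pose proof (Rle_0_sqr (a * d - b * c)). unfold Rsqr in *. nra. }
    assert (0 <= S1 * S2) by nra. nra. }
  rewrite <- (sqrt_square (S1 + S2)) by lra. apply sqrt_le_1_alt. nra.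
Qed.

Lemma Cnorm_lsum_le {A} (l : list A) F (B : A -> R) :
  (forall x, In x l -> Cnorm (F x) <= B x) -> Cnorm (lsum l F) <= fold_right Rplus 0 (map B l).
Proof.
  induction l as [|x l IH]; intro H.
  - change (Cnorm Czero <= 0). rewrite Cnorm_zero. lra.
  - rewrite lsum_cons. cbn [map fold_right]. eapply Rle_trans; [apply Cnorm_add_le|].
    apply Rplus_le_compat; [apply H; now left|]. apply IH. intros; apply H; now right.
Qed.

Lemma Cnorm_mono c b a : Cnorm (mono c b a) <= Cnorm c.
Proof.
  unfold mono. destruct (list_eq_dec Nat.eq_dec a b); [lra|].
  rewrite Cnorm_zero. apply Cnorm_nonneg.
Qed.

Lemma is_germ_bounded n f M : (forall a, length a = n -> Cnorm (f a) <= M) -> is_germ n f.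
Proof. intro H. exists M, 1. intros a Ha. rewrite pow1, Rmult_1_r. auto. Qed.

Lemma is_germ_mono n c b : is_germ n (mono c b).
Proof. apply (is_germ_bounded _ _ (Cnorm c)). intros. apply Cnorm_mono. Qed.

Lemma is_germ_zero n : is_germ n (fun _ => Czero).
Proof. apply (is_germ_bounded _ _ 0). intros. rewrite Cnorm_zero. lra. Qed.

Lemma is_germ_msadd_mono n c b c' b' : is_germ n (msadd (mono c b) (mono c' b')).
Proof.
  apply (is_germ_bounded _ _ (Cnorm c + Cnorm c')). intros a _. unfold msadd.
  eapply Rle_trans; [apply Cnorm_add_le|]. apply Rplus_le_compat; apply Cnorm_mono.
Qed.

Lemma is_germ_linform c : is_germ (length c) (linform c).
Proof.
  apply (is_germ_bounded _ _
    (fold_right Rplus 0 (map (fun i => Cnorm (nth i c Czero)) (seq 0 (length c))))).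
  intros a _. apply Cnorm_lsum_le. intros i _.
  destruct (list_eq_dec Nat.eq_dec a (unitv (length c) i)); [lra|].
  rewrite Cnorm_zero. apply Cnorm_nonneg.
Qed.

Lemma msmul_unit_l n f a : length a = n -> msmul (mono Cone (repeat 0%nat n)) f a = f a.
Proof.
  intros <-. unfold msmul.
  fold (lsum (below a) (fun b => Cmul (mono Cone (repeat 0%nat (length a)) b) (f (lsub a b)))).
  rewrite (lsum_ext _ _ (fun b => if list_eq_dec Nat.eq_dec b (repeat 0%nat (length a))
                                 then f (lsub a b) else Czero)).
  - rewrite lsum_below_delta by apply lle_repeat0. now rewrite lsub_repeat0.
  - intros b _. unfold mono. destruct (list_eq_dec Nat.eq_dec b _); ring.
Qed.

Lemma msmul_zero_l f a : msmul (fun _ => Czero) f a = Czero.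
Proof.
  unfold msmul. fold (lsum (below a) (fun b => Cmul Czero (f (lsub a b)))).
  apply lsum_zero. intros; ring.
Qed.

(* The coefficients are 1 for the generator itself and 0 for the others. *)
Lemma gen_ideal_generator n fs f : Forall (is_germ n) fs -> In f fs -> gen_ideal n fs f.
Proof.
  intros Hfs Hf. split; [eapply Forall_forall; eauto|].
  clear Hfs. induction fs as [|f0 fs IH]; [destruct Hf|].
  destruct (classic (f0 = f)) as [<-|Hne].
  - exists (mono Cone (repeat 0%nat n) :: repeat (fun _ => Czero) (length fs)).
    split; [simpl; now rewrite repeat_length|]. split.
    + constructor; [apply is_germ_mono|]. apply Forall_forall. intros h Hh.
      apply repeat_spec in Hh as ->. apply is_germ_zero.
    + intros a Ha. simpl. rewrite msmul_unit_l by auto.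
      transitivity (Cadd (f0 a) Czero); [ring|]. f_equal. clear.
      induction fs; simpl; [reflexivity|]. rewrite msmul_zero_l, <- IHfs. ring.
  - destruct Hf as [Hf|Hf]; [contradiction|].
    destruct (IH Hf) as [hs [Hl [Hg Hsum]]].
    exists ((fun _ => Czero) :: hs). split; [simpl; auto|]. split.
    + constructor; [apply is_germ_zero | exact Hg].
    + intros a Ha. simpl. rewrite msmul_zero_l, <- Hsum by auto. ring.
Qed.

Lemma is_curve_at_origin n zs : is_curve n zs -> at_origin zs.
Proof. intros [_ [H _]]. eapply Forall_impl; [|exact H]. simpl. tauto. Qed.

Lemma curve_order_exists n zs : is_curve n zs -> exists m, curve_order zs m.
Proof.
  intros [_ [_ [z [Hz [k Hk]]]]].
  destruct (least_nat (fun j => exists z, In z zs /\ z j <> Czero) k) as [m [Pm [_ Hm]]];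
    [eauto|].
  exists m. split; auto. intros j Hj z' Hz'. apply NNPP. intro Hn. apply (Hm j Hj). eauto.
Qed.

Lemma curve_order_pos n zs m : is_curve n zs -> curve_order zs m -> (0 < m)%nat.
Proof.
  intros Hc [[z [Hz Hm]] _]. destruct m; [|lia]. exfalso. apply Hm.
  apply is_curve_at_origin in Hc. eapply Forall_forall in Hc; eauto.
Qed.

Lemma curve_order_unique zs m m' : curve_order zs m -> curve_order zs m' -> m = m'.
Proof.
  intros [[z [Hz Hzm]] Hlow] [[z' [Hz' Hzm']] Hlow'].
  destruct (Nat.lt_total m m') as [H|[H|H]]; auto; exfalso; eauto.
Qed.

Lemma ERle_trans x y z : ERle x y -> ERle y z -> ERle x z.
Proof. destruct x, y, z; simpl; intuition lra. Qed.

Lemma is_glb_exists (S : ER -> Prop) :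
  (forall y, S y -> ERle (Fin 0) y) -> exists x, is_glb S x.
Proof.
  intro Hpos.
  destruct (classic (exists r, S (Fin r))) as [[r0 Hr0]|Hno].
  - set (E := fun x => S (Fin (- x))).
    assert (Hb : bound E).
    { exists 0. intros x Hx. specialize (Hpos _ Hx). simpl in Hpos. lra. }
    assert (He : exists x, E x) by (exists (- r0); unfold E; now rewrite Ropp_involutive).
    destruct (completeness E Hb He) as [m [Hm1 Hm2]].
    exists (Fin (- m)). split.
    + intros [r|] Hy; simpl; auto.
      assert (E (- r)) by (unfold E; now rewrite Ropp_involutive).
      specialize (Hm1 _ H). lra.
    + intros [u|] Hl; simpl.
      * assert (m <= - u); [|lra].
        apply Hm2. intros x Hx. specialize (Hl _ Hx). simpl in Hl. lra.
      * exact (Hl _ Hr0).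
  - exists PInf. split.
    + intros [r|] Hy; simpl; auto. apply Hno. eauto.
    + intros [u|] _; simpl; auto.
Qed.

Lemma INR_div_le k m t : (0 < m)%nat -> (k <= t * m)%nat -> INR k / INR m <= INR t.
Proof.
  intros Hm H. apply lt_0_INR in Hm. apply le_INR in H. rewrite mult_INR in H.
  apply (Rmult_le_reg_r (INR m)); auto. unfold Rdiv. rewrite Rmult_assoc, Rinv_l; lra.
Qed.

Lemma INR_div_ge k m t : (0 < m)%nat -> (t * m <= k)%nat -> INR t <= INR k / INR m.
Proof.
  intros Hm H. apply lt_0_INR in Hm. apply le_INR in H. rewrite mult_INR in H.
  apply (Rmult_le_reg_r (INR m)); auto. unfold Rdiv. rewrite Rmult_assoc, Rinv_l; lra.
Qed.

Definition ratios (n : nat) (J : mseries -> Prop) (zs : list series1) : ER -> Prop :=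
  fun e => exists g, J g /\ ratio_is n g zs e.

Lemma ratios_nonneg n J zs : is_curve n zs -> forall y, ratios n J zs y -> ERle (Fin 0) y.
Proof.
  intros Hc y [g [_ [m [[k|] [Hm [_ ->]]]]]]; simpl; auto.
  pose proof (curve_order_pos _ _ _ Hc Hm).
  change 0 with (INR 0). apply INR_div_ge; lia.
Qed.

Definition inf_ratio n (J : mseries -> Prop) (zs : list series1) : ER :=
  epsilon (inhabits PInf) (is_glb (ratios n J zs)).

Lemma inf_ratio_spec n J zs : is_curve n zs -> is_glb (ratios n J zs) (inf_ratio n J zs).
Proof.
  intro Hc. unfold inf_ratio. apply epsilon_spec, is_glb_exists, ratios_nonneg, Hc.
Qed.

Lemma T1_is_of_bounds n J t :
  (forall zs, is_curve n zs -> exists e, ratios n J zs e /\ ERle e t) ->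
  (exists zs0, is_curve n zs0 /\ forall e, ratios n J zs0 e -> ERle t e) ->
  T1_is n J t.
Proof.
  intros Hup [zs0 [Hc0 Hlow]]. exists (inf_ratio n J). split; [intros; now apply inf_ratio_spec|].
  split.
  - intros y [zs [Hc ->]]. destruct (Hup zs Hc) as [e [He Hle]].
    eapply ERle_trans; [apply (proj1 (inf_ratio_spec n J zs Hc)), He | exact Hle].
  - intros u Hu. eapply ERle_trans; [|apply Hu; eauto].
    apply (proj2 (inf_ratio_spec n J zs0 Hc0)), Hlow.
Qed.

Lemma T1_is_PInf_of_curve n J zs0 : is_curve n zs0 ->
  (forall e, ratios n J zs0 e -> ERle PInf e) -> T1_is n J PInf.
Proof.
  intros Hc0 Hlow. exists (inf_ratio n J). split; [intros; now apply inf_ratio_spec|].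
  split; [intros [] _; simpl; auto|].
  intros u Hu. eapply ERle_trans; [|apply Hu; eauto].
  apply (proj2 (inf_ratio_spec n J zs0 Hc0)), Hlow.
Qed.

Lemma T1_is_ge_of_curve n J e t zs0 : T1_is n J e -> is_curve n zs0 ->
  (forall e', ratios n J zs0 e' -> ERle t e') -> ERle t e.
Proof.
  intros [inff [Hglb [Hub _]]] Hc Hl.
  eapply ERle_trans; [|apply Hub; eauto]. apply (proj2 (Hglb zs0 Hc)), Hl.
Qed.

Section VanishingBounds.
Variables (n : nat) (fs : list mseries).

Lemma ratio_le_of_not_vanish zs m t : Forall (is_germ n) fs -> is_curve n zs ->
  curve_order zs m -> ~ gens_vanish n fs zs (S (t * m)) ->
  exists e, ratios n (gen_ideal n fs) zs e /\ ERle e (Fin (INR t)).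
Proof.
  intros Hfs Hc Hm Hn.
  assert (exists f j, In f fs /\ (j <= t * m)%nat /\ comp n f zs j <> Czero)
    as [f [j [Hf [Hj Hfj]]]].
  { apply NNPP. intro H. apply Hn. intros f Hf j Hj. apply NNPP. intro. apply H.
    exists f, j. split; [auto|split; [lia|auto]]. }
  destruct (order1_exists _ _ Hfj) as [k [Hk Hord]].
  exists (Fin (INR k / INR m)). split.
  - exists f. split; [now apply gen_ideal_generator|]. now exists m, (Some k).
  - apply INR_div_le; [eapply curve_order_pos; eauto | lia].
Qed.

Lemma ratio_ge_of_vanish zs m t e : is_curve n zs -> curve_order zs m ->
  gens_vanish n fs zs (t * m) -> ratios n (gen_ideal n fs) zs e -> ERle (Fin (INR t)) e.
Proof.
  intros Hc Hm Hv [g [Hg [m' [[k|] [Hm' [Hord ->]]]]]]; simpl; auto.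
  rewrite <- (curve_order_unique _ _ _ Hm Hm').
  apply INR_div_ge; [eapply curve_order_pos; eauto|].
  destruct (Nat.le_gt_cases (t * m) k) as [|Hlt]; auto. exfalso. apply (proj1 Hord).
  apply (gen_ideal_ord_ge n fs zs g (t * m)); auto; [apply Hc | eapply is_curve_at_origin, Hc].
Qed.

Lemma T1_is_nat (t : nat) : Forall (is_germ n) fs ->
  (forall zs m, is_curve n zs -> curve_order zs m -> ~ gens_vanish n fs zs (S (t * m))) ->
  (exists zs m, is_curve n zs /\ curve_order zs m /\ gens_vanish n fs zs (t * m)) ->
  T1_is n (gen_ideal n fs) (Fin (INR t)).
Proof.
  intros Hfs Hup [zs0 [m0 [Hc0 [Hm0 Hv0]]]]. apply T1_is_of_bounds.
  - intros zs Hc. destruct (curve_order_exists _ _ Hc) as [m Hm].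
    eapply ratio_le_of_not_vanish; eauto.
  - exists zs0. split; auto. intros e. eapply ratio_ge_of_vanish; eauto.
Qed.

Lemma T1_is_ge_nat (t : nat) e : T1_is n (gen_ideal n fs) e ->
  (exists zs m, is_curve n zs /\ curve_order zs m /\ gens_vanish n fs zs (t * m)) ->
  ERle (Fin (INR t)) e.
Proof.
  intros HT [zs0 [m0 [Hc0 [Hm0 Hv0]]]]. eapply T1_is_ge_of_curve; eauto.
  intros e'. eapply ratio_ge_of_vanish; eauto.
Qed.

Lemma T1_is_PInf zs0 : is_curve n zs0 -> (forall K, gens_vanish n fs zs0 K) ->
  T1_is n (gen_ideal n fs) PInf.
Proof.
  intros Hc0 Hv0. apply (T1_is_PInf_of_curve n _ zs0 Hc0).
  intros e [g [Hg [m [[k|] [Hm [Hord ->]]]]]]; simpl; auto. apply (proj1 Hord).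
  apply (gen_ideal_ord_ge n fs zs0 g (S k)); auto; [apply Hc0 | eapply is_curve_at_origin, Hc0].
Qed.

End VanishingBounds.

Lemma s1scale_1 p : s1scale Cone p = p.
Proof. extensionality k. unfold s1scale. ring. Qed.

Lemma s1scale_opp1 p : s1scale (Copp Cone) p = s1opp p.
Proof. extensionality k. unfold s1scale, s1opp. ring. Qed.

Definition cubic_series (z1 z2 z3 : series1) : series1 :=
  s1add (s1pow z1 3) (s1opp (s1mul z2 z3)).

Definition lin_series (a b c : Cx) (z1 z2 z3 : series1) : series1 :=
  s1add (s1scale a z1) (s1add (s1scale b z2) (s1scale c z3)).

Section Composition3.
Variables z1 z2 z3 : series1.
Hypothesis Hz : at_origin [z1; z2; z3].

Lemma comp_fI1 : comp 3 fI1 [z1; z2; z3] = cubic_series z1 z2 z3.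
Proof.
  unfold fI1, cubic_series. rewrite comp_add, !comp_mono, s1scale_1, s1scale_opp1 by auto.
  cbn [cmono]. rewrite !s1pow_S, !s1pow_0. ring.
Qed.

Lemma comp_fI2 : comp 3 fI2 [z1; z2; z3] = s1mul z2 z2.
Proof.
  unfold fI2. rewrite comp_mono, s1scale_1 by auto. cbn [cmono]. rewrite !s1pow_S, !s1pow_0. ring.
Qed.

Lemma comp_linform3 a b c : comp 3 (linform [a; b; c]) [z1; z2; z3] = lin_series a b c z1 z2 z3.
Proof.
  rewrite (comp_ext 3 _
    (msadd (mono a [1;0;0]%nat) (msadd (mono b [0;1;0]%nat) (mono c [0;0;1]%nat)))).
  2:{ intros x _. change (linform [a; b; c] x) with
        (Cadd (mono a [1;0;0]%nat x)
           (Cadd (mono b [0;1;0]%nat x) (Cadd (mono c [0;0;1]%nat x) Czero))).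
      unfold msadd. ring. }
  rewrite !comp_add, !comp_mono by auto. unfold lin_series.
  cbn [cmono]. rewrite !s1pow_S, !s1pow_0. repeat f_equal; ring.
Qed.

Lemma gens_vanish_Ilin a b c K :
  gens_vanish 3 (Igens ++ [linform [a; b; c]]) [z1; z2; z3] K <->
  ord_ge (cubic_series z1 z2 z3) K /\ ord_ge (s1mul z2 z2) K /\
  ord_ge (lin_series a b c z1 z2 z3) K.
Proof.
  unfold gens_vanish. rewrite <- comp_fI1, <- comp_fI2, <- (comp_linform3 a b c). split.
  - intro H. repeat split; apply H; simpl; auto.
  - intros (H1 & H2 & H3) f [<-|[<-|[<-|[]]]]; auto.
Qed.

End Composition3.

Lemma cubic_series_lead z1 z2 z3 m : ord_ge z1 m -> s1mul z2 z3 (3 * m)%nat = Czero ->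
  cubic_series z1 z2 z3 (3 * m)%nat = Cmul (z1 m) (Cmul (z1 m) (z1 m)).
Proof.
  intros H1 H23. unfold cubic_series, s1add, s1opp. rewrite s1pow3_lead, H23 by auto. ring.
Qed.

Lemma curve_order3 z1 z2 z3 m : curve_order [z1; z2; z3] m ->
  (z1 m <> Czero \/ z2 m <> Czero \/ z3 m <> Czero) /\ ord_ge z1 m /\ ord_ge z2 m /\ ord_ge z3 m.
Proof.
  intros [[z [Hz Hm]] H]. split; [destruct Hz as [<-|[<-|[<-|[]]]]; auto|].
  repeat split; intros j Hj; apply (H j Hj); simpl; auto.
Qed.

Lemma Ilin_not_vanish_4 z1 z2 z3 a b c m : c <> Czero -> curve_order [z1; z2; z3] m ->
  ord_ge (cubic_series z1 z2 z3) (S (4 * m)) -> ord_ge (s1mul z2 z2) (S (4 * m)) ->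
  ord_ge (lin_series a b c z1 z2 z3) (S (4 * m)) -> False.
Proof.
  intros Hc Hm Hcub Hsq Hlin.
  destruct (curve_order3 _ _ _ _ Hm) as [Hnz [L1 [L2 L3]]].
  assert (Z2 : ord_ge z2 (S (2 * m))) by (intros j Hj; apply (ord_ge_sqr _ _ Hsq); lia).
  destruct (classic (z1 m = Czero)) as [E1|E1].
  - assert (E2 : z2 m = Czero) by (apply Z2; lia).
    destruct Hnz as [?|[?|E3]]; try contradiction.
    apply (Cmul_neq0 _ _ Hc E3). specialize (Hlin m ltac:(lia)).
    unfold lin_series, s1add, s1scale in Hlin. rewrite E1, E2 in Hlin. rewrite <- Hlin. ring.
  - assert (H23 : s1mul z2 z3 (3 * m)%nat = Czero)
      by (apply (ord_ge_mul _ _ (S (2 * m)) m); auto; lia).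
    apply (Cmul_neq0 _ _ E1 (Cmul_neq0 _ _ E1 E1)).
    rewrite <- (cubic_series_lead z1 z2 z3 m L1 H23). apply Hcub. lia.
Qed.

Lemma Ilin_not_vanish_3 z1 z2 z3 b m : curve_order [z1; z2; z3] m ->
  ord_ge (cubic_series z1 z2 z3) (S (3 * m)) -> ord_ge (s1mul z2 z2) (S (3 * m)) ->
  ord_ge (lin_series Czero b Cone z1 z2 z3) (S (3 * m)) -> False.
Proof.
  intros Hm Hcub Hsq Hlin.
  destruct (curve_order3 _ _ _ _ Hm) as [Hnz [L1 [L2 L3]]].
  pose proof (ord_ge_sqr _ _ Hsq) as Z2.
  assert (Z3 : forall j, (j + j < S (3 * m))%nat -> z3 j = Czero).
  { intros j Hj. specialize (Hlin j ltac:(lia)). unfold lin_series, s1add, s1scale in Hlin.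
    rewrite (Z2 j Hj) in Hlin. rewrite <- Hlin. ring. }
  destruct Hnz as [E1|[E2|E3]]; [|apply E2, Z2; lia|apply E3, Z3; lia].
  assert (H23 : s1mul z2 z3 (3 * m)%nat = Czero).
  { rewrite s1mul_sumC. apply sumC_zero. intros i Hi.
    destruct (Nat.le_gt_cases (i + i) (3 * m)); [rewrite Z2 | rewrite Z3]; try lia; ring. }
  apply (Cmul_neq0 _ _ E1 (Cmul_neq0 _ _ E1 E1)).
  rewrite <- (cubic_series_lead z1 z2 z3 m L1 H23). apply Hcub. lia.
Qed.

Definition poly2 (u v : Cx) : series1 :=
  fun k => match k with 1%nat => u | 2%nat => v | _ => Czero end.

Lemma is_germ1_poly2 u v : is_germ1 (poly2 u v).
Proof.
  exists (Cnorm u + Cnorm v), 1. intro k. rewrite pow1, Rmult_1_r.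
  pose proof (Cnorm_nonneg u); pose proof (Cnorm_nonneg v).
  destruct k as [|[|[|k]]]; simpl; rewrite ?Cnorm_zero; lra.
Qed.

Lemma is_curve_poly2 u1 v1 u2 v2 u3 v3 : u1 <> Czero \/ u2 <> Czero \/ u3 <> Czero ->
  is_curve 3 [poly2 u1 v1; poly2 u2 v2; poly2 u3 v3].
Proof.
  intro H. split; [reflexivity|]. split; [repeat constructor; apply is_germ1_poly2|].
  destruct H as [H|[H|H]];
    [exists (poly2 u1 v1) | exists (poly2 u2 v2) | exists (poly2 u3 v3)];
    (split; [simpl; auto|exists 1%nat; exact H]).
Qed.

Lemma curve_order_poly2 u1 v1 u2 v2 u3 v3 : u1 <> Czero \/ u2 <> Czero \/ u3 <> Czero ->
  curve_order [poly2 u1 v1; poly2 u2 v2; poly2 u3 v3] 1.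
Proof.
  intro H. split.
  - destruct H as [H|[H|H]];
      [exists (poly2 u1 v1) | exists (poly2 u2 v2) | exists (poly2 u3 v3)];
      (split; [simpl; auto|exact H]).
  - intros j Hj z Hz. replace j with O by lia. destruct Hz as [<-|[<-|[<-|[]]]]; reflexivity.
Qed.

Lemma poly2_vanishing_witness fs (t : nat) u1 v1 u2 v2 u3 v3 :
  gens_vanish 3 fs [poly2 u1 v1; poly2 u2 v2; poly2 u3 v3] t ->
  u1 <> Czero \/ u2 <> Czero \/ u3 <> Czero ->
  exists zs m, is_curve 3 zs /\ curve_order zs m /\ gens_vanish 3 fs zs (t * m).
Proof.
  intros Hv Hu. exists [poly2 u1 v1; poly2 u2 v2; poly2 u3 v3], 1%nat.
  rewrite Nat.mul_1_r. split; [now apply is_curve_poly2|]. split; [now apply curve_order_poly2|].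
  exact Hv.
Qed.

Lemma poly2_at_origin u1 v1 u2 v2 u3 v3 : at_origin [poly2 u1 v1; poly2 u2 v2; poly2 u3 v3].
Proof. repeat constructor. Qed.

Lemma gens_vanish_curve4 a b c :
  gens_vanish 3 (Igens ++ [linform [a; b; c]])
    [poly2 (Cmul a c) Czero; poly2 Czero (Copp (Cmul a (Cmul c (Cmul c c))));
     poly2 (Copp (Cmul a a)) (Cmul a (Cmul b (Cmul c c)))] 4.
Proof.
  apply gens_vanish_Ilin; [apply poly2_at_origin|].
  unfold cubic_series, lin_series, s1add, s1opp, s1scale. rewrite s1pow_3.
  repeat split; intros j Hj; destruct j as [|[|[|[|j]]]]; try lia; cbn; ring.
Qed.

Lemma gens_vanish_curve3 a b c :
  gens_vanish 3 (Igens ++ [linform [a; b; c]])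
    [poly2 c Czero; poly2 Czero Czero; poly2 (Copp a) Czero] 3.
Proof.
  apply gens_vanish_Ilin; [apply poly2_at_origin|].
  unfold cubic_series, lin_series, s1add, s1opp, s1scale. rewrite s1pow_3.
  repeat split; intros j Hj; destruct j as [|[|[|j]]]; try lia; cbn; ring.
Qed.

Lemma gens_vanish_z3_axis a b K :
  gens_vanish 3 (Igens ++ [linform [a; b; Czero]])
    [poly2 Czero Czero; poly2 Czero Czero; poly2 Cone Czero] K.
Proof.
  assert (E : poly2 Czero Czero = s1zero) by (extensionality k; now destruct k as [|[|[|k]]]).
  apply gens_vanish_Ilin; [apply poly2_at_origin|]. rewrite E.
  replace (cubic_series s1zero s1zero (poly2 Cone Czero)) with s1zero
    by (unfold cubic_series; rewrite s1pow_3; ring).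
  replace (s1mul s1zero s1zero) with s1zero by ring.
  repeat split; intros j _; unfold lin_series, s1add, s1scale, s1zero; ring.
Qed.

Lemma Ilin_germs a b c : Forall (is_germ 3) (Igens ++ [linform [a; b; c]]).
Proof.
  repeat constructor;
    [apply is_germ_msadd_mono | apply is_germ_mono | apply (is_germ_linform [a; b; c])].
Qed.

Lemma is_curve3 zs : is_curve 3 zs -> exists z1 z2 z3, zs = [z1; z2; z3].
Proof. intros [Hl _]. destruct zs as [|z1 [|z2 [|z3 [|]]]]; try discriminate. eauto. Qed.

Lemma T1_Ilin_4 a b c : a <> Czero -> c <> Czero ->
  T1_is 3 (gen_ideal 3 (Igens ++ [linform [a; b; c]])) (Fin 4).
Proof.
  intros Ha Hc. replace 4 with (INR 4) by (simpl; lra).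
  apply T1_is_nat; [apply Ilin_germs| |].
  - intros zs m Hzs Hm. destruct (is_curve3 _ Hzs) as (z1 & z2 & z3 & ->).
    rewrite gens_vanish_Ilin by (eapply is_curve_at_origin; eauto).
    intros (H1 & H2 & H3). exact (Ilin_not_vanish_4 _ _ _ a b c m Hc Hm H1 H2 H3).
  - eapply poly2_vanishing_witness; [apply gens_vanish_curve4|]. left. now apply Cmul_neq0.
Qed.

Lemma T1_Ilin_3 b : T1_is 3 (gen_ideal 3 (Igens ++ [linform [Czero; b; Cone]])) (Fin 3).
Proof.
  replace 3 with (INR 3) by (simpl; lra).
  apply T1_is_nat; [apply Ilin_germs| |].
  - intros zs m Hzs Hm. destruct (is_curve3 _ Hzs) as (z1 & z2 & z3 & ->).
    rewrite gens_vanish_Ilin by (eapply is_curve_at_origin; eauto).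
    intros (H1 & H2 & H3). exact (Ilin_not_vanish_3 _ _ _ b m Hm H1 H2 H3).
  - eapply poly2_vanishing_witness; [apply gens_vanish_curve3|]. left. apply Cone_neq0.
Qed.

Lemma T1_Ilin_PInf a b : T1_is 3 (gen_ideal 3 (Igens ++ [linform [a; b; Czero]])) PInf.
Proof.
  apply (T1_is_PInf _ _ [poly2 Czero Czero; poly2 Czero Czero; poly2 Cone Czero]).
  - apply is_curve_poly2. right; right. apply Cone_neq0.
  - apply gens_vanish_z3_axis.
Qed.

Lemma T1_Ilin_ge3 a b c e : T1_is 3 (gen_ideal 3 (Igens ++ [linform [a; b; c]])) e ->
  ERle (Fin 3) e.
Proof.
  intro HT. replace 3 with (INR 3) by (simpl; lra). apply (T1_is_ge_nat _ _ _ _ HT).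
  destruct (classic (c = Czero)) as [->|Hc].
  - eapply poly2_vanishing_witness; [apply gens_vanish_z3_axis|]. right; right. apply Cone_neq0.
  - eapply poly2_vanishing_witness; [apply gens_vanish_curve3|]. now left.
Qed.

Lemma T2_Igens : Tq_is 3 2 Igens (Fin 3).
Proof.
  split.
  - intros y [ws [Hl [Hf HT]]]. destruct ws as [|w [|]]; simpl in Hl; try discriminate.
    inversion Hf as [|? ? Hw _]; subst.
    destruct w as [|a [|b [|c [|]]]]; simpl in Hw; try discriminate.
    exact (T1_Ilin_ge3 _ _ _ _ HT).
  - intros l Hl. apply Hl. exists [[Czero; Czero; Cone]].
    split; [reflexivity|]. split; [repeat constructor|]. apply T1_Ilin_3.
Qed.

(* The Zariski open set is [a c <> 0]. *)
Lemma T1_Ilin_generic :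
  exists (P : mpoly) (d : nat), homogeneous 3 P d /\
    (exists a b c : Cx, [a; b; c] <> [Czero; Czero; Czero] /\ peval P [a; b; c] <> Czero) /\
    (forall a b c : Cx, [a; b; c] <> [Czero; Czero; Czero] -> peval P [a; b; c] <> Czero ->
       T1_is 3 (gen_ideal 3 (Igens ++ [linform [a; b; c]])) (Fin 4)).
Proof.
  exists [(Cone, [1; 0; 1]%nat)], 2%nat.
  assert (HP : forall a b c, peval [(Cone, [1; 0; 1]%nat)] [a; b; c] = Cmul a c)
    by (intros; unfold peval; cbn; ring).
  split; [repeat constructor|split].
  - exists Cone, Cone, Cone. split.
    + intro E. apply Cone_neq0. congruence.
    + rewrite HP. apply Cmul_neq0; apply Cone_neq0.
  - intros a b c _ Hp. rewrite HP in Hp.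
    apply T1_Ilin_4; intro E; apply Hp; rewrite E; ring.
Qed.

Theorem mainTheorem2 :
  (* T_2(I) = 3 *)
  Tq_is 3 2 Igens (Fin 3) /\
  (* beta_2(I) = 4: a nonempty Zariski open set of planes {w = 0} (w = a z1 + b z2 + c z3 <> 0,
     G^2(Cx^3) identified with P^2) given by a homogeneous polynomial P on which T_1(I,w) = 4 *)
  (exists (P : mpoly) (d : nat), homogeneous 3 P d /\
     (exists a b c : Cx, [a; b; c] <> [Czero; Czero; Czero] /\ peval P [a; b; c] <> Czero) /\
     (forall a b c : Cx, [a; b; c] <> [Czero; Czero; Czero] -> peval P [a; b; c] <> Czero ->
        T1_is 3 (gen_ideal 3 (Igens ++ [linform [a; b; c]])) (Fin 4))) /\
  (* T_1(I, a z1 + b z2 + z3) = 4 if a <> 0 *)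
  (forall a b : Cx, a <> Czero ->
     T1_is 3 (gen_ideal 3 (Igens ++ [linform [a; b; Cone]])) (Fin 4)) /\
  (* T_1(I, b z2 + z3) = 3 *)
  (forall b : Cx, T1_is 3 (gen_ideal 3 (Igens ++ [linform [Czero; b; Cone]])) (Fin 3)) /\
  (* T_1(I, a z1 + b z2) = infinity *)
  (forall a b : Cx, T1_is 3 (gen_ideal 3 (Igens ++ [linform [a; b; Czero]])) PInf).
Proof.
  split; [exact T2_Igens|]. split; [exact T1_Ilin_generic|].
  split; [intros a b Ha; exact (T1_Ilin_4 a b Cone Ha Cone_neq0)|].
  split; [exact T1_Ilin_3 | exact T1_Ilin_PInf].
Qed.
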